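(* Let $f=f(n)>0$ and suppose $f\in O(1/n)$. Then $$O\left(\frac{n^8f^2+n^2}{n^{15}f^7+n^3f^3}+\frac{n^{13}f^3+n^4}{n^{23}f^9+n^2f^2}+\sum_{k=3}^{n-1}\frac{k^3n^{12}(n-k)^3f^3+k^9n^6}{n^{16}(n-k)^9f^9+k^{16}(n-k)f}\right)\le O\left(\frac{\ln(n)}{nf}+\frac1{n^4f^4}\right).$$ Moreover, if $f\in o(1/n^3)$, then the left-hand side is $O\left(\frac1{nf^3}\right)$.
   Context: Asymptotic notation refers to $n\to\infty$. *)

From Stdlib Require Import Reals Lra Lia List.
Open Scope R_scope.

Definition bigO (g h : nat -> R) : Prop :=
  exists C : R, exists N : nat, forall n : nat, (N <= n)%nat ->
    Rabs (g n) <= C * Rabs (h n).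

Definition littleo (g h : nat -> R) : Prop :=
  forall eps : R, 0 < eps -> exists N : nat, forall n : nat, (N <= n)%nat ->
    Rabs (g n) <= eps * Rabs (h n).

(* sum_{k=a}^{b} F k  (empty, = 0, when b < a) *)
Definition sum_range (a b : nat) (F : nat -> R) : R :=
  fold_right Rplus 0 (map F (seq a (S b - a))).

Definition lhs17 (f : nat -> R) (m : nat) : R :=
  let n := INR m in
  let x := f m in
  (n ^ 8 * x ^ 2 + n ^ 2) / (n ^ 15 * x ^ 7 + n ^ 3 * x ^ 3)
  + (n ^ 13 * x ^ 3 + n ^ 4) / (n ^ 23 * x ^ 9 + n ^ 2 * x ^ 2)
  + sum_range 3 (m - 1) (fun j =>
      let k := INR j in
      let nk := INR (m - j) in
      (k ^ 3 * n ^ 12 * nk ^ 3 * x ^ 3 + k ^ 9 * n ^ 6)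
      / (n ^ 16 * nk ^ 9 * x ^ 9 + k ^ 16 * nk * x)).

(* Put t = n f.  The two isolated terms are at most 2/t^4 and at most 2/(n f^3).
   Split the sum at k = n/2.  For k <= n/2, replacing n - k by n costs a factor
   2^9, and the resulting term is at most 8a/(t^4 (a+k)^2) with a = n sqrt t, or
   at most 2/(n f^3 k^2) when n^3 f <= 1; both bounds telescope.  For k > n/2 the
   term is at most 2^13 (n-k)^2 f^2/n + 2^7/(n (n-k) f), which sums to
   O(t^2 + ln n / t).  If t = O(1) then t^2 = O(1/t^4); if n^3 f <= 1 then every
   one of these bounds is O(1/(n f^3)). *)

From Stdlib Require Import Reals Lra Lia List.
From Coquelicot Require Import Rcomplements.
Open Scope R_scope.

Ltac positivity :=
  solve
  [ assumption | lra
  | apply Rmult_lt_0_compat; positivity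
  | apply Rplus_lt_0_compat; positivity
  | apply Rplus_lt_le_0_compat; positivity
  | apply Rplus_le_lt_0_compat; positivity
  | apply pow_lt; positivity
  | apply Rinv_0_lt_compat; positivity
  | apply Rdiv_lt_0_compat; positivity
  | apply sqrt_lt_R0; positivity
  | apply Rmult_le_pos; positivity
  | apply Rplus_le_le_0_compat; positivity
  | apply pow_le; positivity
  | apply Rdiv_le_0_compat; positivity
  | apply Rlt_le; positivity ].

Lemma Rdiv_le_compat a a' b b' : 0 <= a <= a' -> 0 < b' <= b -> a / b <= a' / b'.
Proof.
  intros [H1 H2] [H3 H4]; unfold Rdiv.
  apply Rmult_le_compat; auto; [positivity|apply Rinv_le_contravar; lra].
Qed.

Lemma Rdiv_le_cross a b c d : 0 < b -> 0 < d -> a * d <= c * b -> a / b <= c / d.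
Proof.
  intros Hb Hd H; apply (Rmult_le_reg_r (b * d)); [positivity|].
  replace (a / b * (b * d)) with (a * d) by (field; lra).
  replace (c / d * (b * d)) with (c * b) by (field; lra); lra.
Qed.

Definition lsum (F : nat -> R) (l : list nat) : R := fold_right Rplus 0 (map F l).

Lemma lsum_le F G l : (forall k, In k l -> F k <= G k) -> lsum F l <= lsum G l.
Proof.
  induction l as [|a l IH]; intros H; unfold lsum in *; simpl; [lra|].
  apply Rplus_le_compat; [apply H; now left|].
  apply IH; intros k Hk; apply H; now right.
Qed.

Lemma lsum_plus F G l : lsum (fun k => F k + G k) l = lsum F l + lsum G l.
Proof. induction l as [|a l IH]; unfold lsum in *; simpl; [lra|]. rewrite IH; lra. Qed.

Lemma lsum_scal c F l : lsum (fun k => c * F k) l = c * lsum F l.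
Proof. induction l as [|a l IH]; unfold lsum in *; simpl; [lra|]. rewrite IH; lra. Qed.

Lemma lsum_const c l : lsum (fun _ => c) l = INR (length l) * c.
Proof.
  induction l as [|a l IH]; unfold lsum in *; simpl length; [simpl; lra|].
  rewrite S_INR; simpl; rewrite IH; lra.
Qed.

Lemma lsum_nonneg F l : (forall k, In k l -> 0 <= F k) -> 0 <= lsum F l.
Proof.
  intros H; apply Rle_trans with (lsum (fun _ => 0) l).
  - rewrite lsum_const; lra.
  - now apply lsum_le.
Qed.

Lemma lsum_telescope g s L :
  lsum (fun k => g k - g (S k)) (seq s L) = g s - g (s + L)%nat.
Proof.
  revert s; induction L as [|L IH]; intros s; unfold lsum in *; simpl.
  - rewrite Nat.add_0_r; lra.
  - rewrite IH; replace (S s + L)%nat with (s + S L)%nat by lia; lra.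
Qed.

Lemma lsum_telescope_le F g s L :
  (forall k, (s <= k < s + L)%nat -> F k <= g k - g (S k)) -> 0 <= g (s + L)%nat ->
  lsum F (seq s L) <= g s.
Proof.
  intros HF Hg.
  apply Rle_trans with (lsum (fun k => g k - g (S k)) (seq s L)).
  - apply lsum_le; intros k Hk; apply in_seq in Hk; apply HF; lia.
  - rewrite lsum_telescope; lra.
Qed.

Lemma lsum_inv_sq_le a s L : 0 < a + INR s - 1 ->
  lsum (fun k => 1 / (a + INR k) ^ 2) (seq s L) <= 1 / (a + INR s - 1).
Proof.
  intros Ha.
  apply lsum_telescope_le with (g := fun k => 1 / (a + INR k - 1)).
  - intros k Hk; rewrite S_INR.
    assert (INR s <= INR k) by (apply le_INR; lia).
    replace (1 / (a + INR k - 1) - 1 / (a + (INR k + 1) - 1))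
      with (1 / ((a + INR k - 1) * (a + INR k))) by (field; lra).
    apply Rdiv_le_compat; [lra|]; split; [positivity|nra].
  - assert (INR s <= INR (s + L)) by (apply le_INR; lia); positivity.
Qed.

Lemma inv_le_2_ln_succ y : 1 <= y -> 1 / y <= 2 * (ln (y + 1) - ln y).
Proof.
  intros Hy.
  assert (Hln : ln y - ln (y + 1) <= y / (y + 1) - 1).
  { rewrite <- ln_div by lra.
    pose proof (exp_ineq1_le (ln (y / (y + 1)))) as Hexp.
    rewrite exp_ln in Hexp by positivity; lra. }
  replace (y / (y + 1) - 1) with (- (1 / (y + 1))) in Hln by (field; lra).
  assert (1 / y <= 2 * (1 / (y + 1))).
  { replace (2 * (1 / (y + 1))) with (2 / (y + 1)) by (field; lra).
    apply Rdiv_le_cross; lra. }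
  lra.
Qed.

Lemma lsum_inv_sub_le_ln m s : (1 <= s <= m)%nat ->
  lsum (fun j => 1 / INR (m - j)) (seq s (m - s)) <= 2 * ln (INR m).
Proof.
  intros Hs.
  apply Rle_trans with (2 * ln (INR (m - s) + 1)).
  - apply lsum_telescope_le with (g := fun j => 2 * ln (INR (m - j) + 1)).
    + intros j Hj.
      replace (m - j)%nat with (S (m - S j)) by lia. rewrite S_INR.
      assert (0 <= INR (m - S j)) by apply pos_INR.
      pose proof (inv_le_2_ln_succ (INR (m - S j) + 1) ltac:(lra)); lra.
    + replace (m - (s + (m - s)))%nat with 0%nat by lia.
      simpl; rewrite Rplus_0_l, ln_1; lra.
  - apply Rmult_le_compat_l; [lra|]. apply ln_le; [pose proof (pos_INR (m - s)); lra|].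
    rewrite minus_INR by lia. assert (1 <= INR s) by (apply (le_INR 1); lia). lra.
Qed.

Definition first_term (n x : R) : R :=
  (n ^ 8 * x ^ 2 + n ^ 2) / (n ^ 15 * x ^ 7 + n ^ 3 * x ^ 3).

Definition second_term (n x : R) : R :=
  (n ^ 13 * x ^ 3 + n ^ 4) / (n ^ 23 * x ^ 9 + n ^ 2 * x ^ 2).

Definition summand (n k l x : R) : R :=
  (k ^ 3 * n ^ 12 * l ^ 3 * x ^ 3 + k ^ 9 * n ^ 6)
  / (n ^ 16 * l ^ 9 * x ^ 9 + k ^ 16 * l * x).

Lemma pow_le_1_add_pow w a b : 0 <= w -> (a <= b)%nat -> w ^ a <= 1 + w ^ b.
Proof.
  intros Hw Hab. assert (0 <= w ^ b) by positivity.
  destruct (Rle_dec w 1) as [Hw1|Hw1].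
  - pose proof (pow_incr w 1 a ltac:(lra)); rewrite pow1 in *; lra.
  - pose proof (Rle_pow w a b ltac:(lra) Hab); lra.
Qed.

(* Both terms are functions of [w = n^3 x] once a monomial is factored out. *)
Lemma first_term_le n x : 0 < n -> 0 < x ->
  first_term n x <= 2 / (n * x) ^ 4 /\ first_term n x <= 2 / (n * x ^ 3).
Proof.
  intros Hn Hx; unfold first_term.
  assert (Hw : 0 <= n ^ 3 * x) by positivity.
  split; apply Rdiv_le_cross; try positivity.
  - replace ((n ^ 8 * x ^ 2 + n ^ 2) * (n * x) ^ 4)
      with (n ^ 3 * x ^ 3 * ((n ^ 3 * x) ^ 3 + n ^ 3 * x)) by ring.
    replace (2 * (n ^ 15 * x ^ 7 + n ^ 3 * x ^ 3))
      with (n ^ 3 * x ^ 3 * (2 * (1 + (n ^ 3 * x) ^ 4))) by ring.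
    apply Rmult_le_compat_l; [positivity|].
    pose proof (pow_le_1_add_pow _ 3 4 Hw ltac:(lia)).
    pose proof (pow_le_1_add_pow _ 1 4 Hw ltac:(lia)). rewrite pow_1 in *; lra.
  - replace ((n ^ 8 * x ^ 2 + n ^ 2) * (n * x ^ 3))
      with (n ^ 3 * x ^ 3 * ((n ^ 3 * x) ^ 2 + 1)) by ring.
    replace (2 * (n ^ 15 * x ^ 7 + n ^ 3 * x ^ 3))
      with (n ^ 3 * x ^ 3 * (2 * (1 + (n ^ 3 * x) ^ 4))) by ring.
    apply Rmult_le_compat_l; [positivity|].
    pose proof (pow_le_1_add_pow _ 2 4 Hw ltac:(lia)).
    assert (0 <= (n ^ 3 * x) ^ 4) by positivity; lra.
Qed.

Lemma second_term_le n x : 0 < n -> 0 < x ->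
  second_term n x <= 2 / (n * x) ^ 4 /\ second_term n x <= 2 / (n * x ^ 3).
Proof.
  intros Hn Hx; unfold second_term.
  assert (Hw : 0 <= n ^ 3 * x) by positivity.
  split; apply Rdiv_le_cross; try positivity.
  - replace ((n ^ 13 * x ^ 3 + n ^ 4) * (n * x) ^ 4)
      with (n ^ 2 * x ^ 2 * ((n ^ 3 * x) ^ 5 + (n ^ 3 * x) ^ 2)) by ring.
    replace (2 * (n ^ 23 * x ^ 9 + n ^ 2 * x ^ 2))
      with (n ^ 2 * x ^ 2 * (2 * (1 + (n ^ 3 * x) ^ 7))) by ring.
    apply Rmult_le_compat_l; [positivity|].
    pose proof (pow_le_1_add_pow _ 5 7 Hw ltac:(lia)).
    pose proof (pow_le_1_add_pow _ 2 7 Hw ltac:(lia)); lra.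
  - replace ((n ^ 13 * x ^ 3 + n ^ 4) * (n * x ^ 3))
      with (n ^ 2 * x ^ 2 * ((n ^ 3 * x) ^ 4 + n ^ 3 * x)) by ring.
    replace (2 * (n ^ 23 * x ^ 9 + n ^ 2 * x ^ 2))
      with (n ^ 2 * x ^ 2 * (2 * (1 + (n ^ 3 * x) ^ 7))) by ring.
    apply Rmult_le_compat_l; [positivity|].
    pose proof (pow_le_1_add_pow _ 4 7 Hw ltac:(lia)).
    pose proof (pow_le_1_add_pow _ 1 7 Hw ltac:(lia)). rewrite pow_1 in *; lra.
Qed.

Lemma summand_nonneg n k l x : 0 < n -> 0 < k -> 0 < l -> 0 < x ->
  0 <= summand n k l x.
Proof. intros; unfold summand; positivity. Qed.

Lemma summand_le_full n k l x : 0 <= k -> 0 < l -> 0 < x -> n <= 2 * l -> l <= n ->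
  summand n k l x <= 2 ^ 9 * summand n k n x.
Proof.
  intros Hk Hl Hx Hnl Hln; unfold summand.
  assert (Hn : 0 < n) by lra.
  set (D := n ^ 16 * n ^ 9 * x ^ 9 + k ^ 16 * n * x).
  assert (HD : 0 < D) by (unfold D; positivity).
  replace (2 ^ 9 * ((k ^ 3 * n ^ 12 * n ^ 3 * x ^ 3 + k ^ 9 * n ^ 6) / D))
    with ((k ^ 3 * n ^ 12 * n ^ 3 * x ^ 3 + k ^ 9 * n ^ 6) / (D / 2 ^ 9)) by (field; lra).
  apply Rdiv_le_compat; split; try positivity.
  - apply Rplus_le_compat_r.
    assert (l ^ 3 <= n ^ 3) by (apply pow_incr; lra).
    assert (0 <= k ^ 3 * n ^ 12 * x ^ 3) by positivity.
    replace (k ^ 3 * n ^ 12 * l ^ 3 * x ^ 3) with (k ^ 3 * n ^ 12 * x ^ 3 * l ^ 3) by ring.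
    replace (k ^ 3 * n ^ 12 * n ^ 3 * x ^ 3) with (k ^ 3 * n ^ 12 * x ^ 3 * n ^ 3) by ring.
    apply Rmult_le_compat_l; assumption.
  - assert (Hl9 : (n / 2) ^ 9 <= l ^ 9) by (apply pow_incr; split; lra).
    assert (n ^ 16 * x ^ 9 * (n / 2) ^ 9 <= n ^ 16 * x ^ 9 * l ^ 9)
      by (apply Rmult_le_compat_l; [positivity|assumption]).
    assert (k ^ 16 * x * (n / 2) <= k ^ 16 * x * l)
      by (apply Rmult_le_compat_l; [positivity|lra]).
    assert (0 <= k ^ 16 * n * x) by positivity.
    replace (n ^ 16 * x ^ 9 * (n / 2) ^ 9) with (n ^ 16 * n ^ 9 * x ^ 9 / 2 ^ 9) in * by field.
    unfold D; lra.
Qed.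

Lemma summand_le_tail n k l x : 0 < n -> 0 < l -> 0 < x -> n <= 2 * k ->
  summand n k l x <= 2 ^ 13 * l ^ 2 * x ^ 2 / n + 2 ^ 7 / (n * l * x).
Proof.
  intros Hn Hl Hx Hnk; unfold summand.
  assert (Hk : 0 < k) by lra.
  apply Rle_trans with ((k ^ 3 * n ^ 12 * l ^ 3 * x ^ 3 + k ^ 9 * n ^ 6) / (k ^ 16 * l * x)).
  { apply Rdiv_le_compat; split; try positivity.
    assert (0 <= n ^ 16 * l ^ 9 * x ^ 9) by positivity; lra. }
  replace ((k ^ 3 * n ^ 12 * l ^ 3 * x ^ 3 + k ^ 9 * n ^ 6) / (k ^ 16 * l * x))
    with (n ^ 12 / k ^ 13 * (l ^ 2 * x ^ 2) + n ^ 6 / k ^ 7 * (1 / (l * x)))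
    by (field; repeat split; lra).
  replace (2 ^ 13 * l ^ 2 * x ^ 2 / n + 2 ^ 7 / (n * l * x))
    with (2 ^ 13 / n * (l ^ 2 * x ^ 2) + 2 ^ 7 / n * (1 / (l * x)))
    by (field; repeat split; lra).
  apply Rplus_le_compat; (apply Rmult_le_compat_r; [positivity|]);
    apply Rdiv_le_cross; try positivity.
  - replace (2 ^ 13 * k ^ 13) with ((2 * k) ^ 13) by ring.
    replace (n ^ 12 * n) with (n ^ 13) by ring. apply pow_incr; lra.
  - replace (2 ^ 7 * k ^ 7) with ((2 * k) ^ 7) by ring.
    replace (n ^ 6 * n) with (n ^ 7) by ring. apply pow_incr; lra.
Qed.

Lemma summand_le n k l x : 1 <= k -> 1 <= l -> k + l = n -> 0 < x ->
  summand n k l x <= 2 ^ 9 * summand n k n x + 2 ^ 13 * n * x ^ 2 + 2 ^ 7 / (n * x) * (1 / l).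
Proof.
  intros Hk Hl Hn Hx.
  assert (Hfull : 0 <= summand n k n x) by (apply summand_nonneg; lra).
  assert (0 <= 2 ^ 7 / (n * x) * (1 / l)) by positivity.
  assert (0 <= 2 ^ 13 * n * x ^ 2) by positivity.
  destruct (Rle_dec n (2 * l)).
  - pose proof (summand_le_full n k l x ltac:(lra) ltac:(lra) Hx ltac:(lra) ltac:(lra)); lra.
  - pose proof (summand_le_tail n k l x ltac:(lra) ltac:(lra) Hx ltac:(lra)) as Htail.
    assert (l ^ 2 <= n ^ 2) by (apply pow_incr; lra).
    replace (2 ^ 13 * l ^ 2 * x ^ 2 / n) with (2 ^ 13 * x ^ 2 / n * l ^ 2) in Htail by (field; lra).
    replace (2 ^ 7 / (n * l * x)) with (2 ^ 7 / (n * x) * (1 / l)) in Htail by (field; lra).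
    assert (2 ^ 13 * x ^ 2 / n * l ^ 2 <= 2 ^ 13 * x ^ 2 / n * n ^ 2)
      by (apply Rmult_le_compat_l; [positivity|assumption]).
    replace (2 ^ 13 * x ^ 2 / n * n ^ 2) with (2 ^ 13 * n * x ^ 2) in * by (field; lra).
    lra.
Qed.

Lemma cubic_ninth_le s : 0 <= s -> (s ^ 3 + s ^ 9) * (1 + s) ^ 2 <= 8 * (1 + s ^ 16).
Proof.
  intros Hs.
  assert ((1 + s) ^ 2 <= 2 * (1 + s ^ 2)).
  { replace (2 * (1 + s ^ 2)) with ((1 + s) ^ 2 + (1 - s) ^ 2) by ring.
    pose proof (pow2_ge_0 (1 - s)); lra. }
  assert (0 <= s ^ 3 + s ^ 9) by positivity.
  apply Rle_trans with ((s ^ 3 + s ^ 9) * (2 * (1 + s ^ 2))).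
  { apply Rmult_le_compat_l; assumption. }
  replace ((s ^ 3 + s ^ 9) * (2 * (1 + s ^ 2))) with (2 * (s ^ 3 + s ^ 5 + s ^ 9 + s ^ 11)) by ring.
  pose proof (pow_le_1_add_pow s 3 16 Hs ltac:(lia)).
  pose proof (pow_le_1_add_pow s 5 16 Hs ltac:(lia)).
  pose proof (pow_le_1_add_pow s 9 16 Hs ltac:(lia)).
  pose proof (pow_le_1_add_pow s 11 16 Hs ltac:(lia)).
  lra.
Qed.

(* The full summand is homogeneous in [k / a] with [a = n sqrt (n x)]. *)
Lemma summand_full_le n k x : 0 < n -> 0 <= k -> 0 < x ->
  summand n k n x
  <= 8 * (n * sqrt (n * x)) / ((n * x) ^ 4 * (n * sqrt (n * x) + k) ^ 2).
Proof.
  intros Hn Hk Hx.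
  assert (Hu2 : sqrt (n * x) ^ 2 = n * x) by (apply pow2_sqrt; positivity).
  assert (Hu : 0 < sqrt (n * x)) by positivity.
  set (u := sqrt (n * x)) in *; clearbody u.
  assert (Hxu : x = u ^ 2 / n) by (rewrite Hu2; field; lra).
  rewrite Hxu; clear Hu2 Hxu Hx; unfold summand.
  set (s := k / (n * u)).
  assert (Hs : 0 <= s) by (unfold s; positivity).
  assert (Hks : k = s * (n * u)) by (unfold s; field; lra).
  clearbody s; subst k.
  apply Rdiv_le_cross; try positivity.
  replace (((s * (n * u)) ^ 3 * n ^ 12 * n ^ 3 * (u ^ 2 / n) ^ 3 + (s * (n * u)) ^ 9 * n ^ 6)
           * ((n * (u ^ 2 / n)) ^ 4 * (n * u + s * (n * u)) ^ 2))
    with (n ^ 17 * u ^ 19 * ((s ^ 3 + s ^ 9) * (1 + s) ^ 2)) by (field; lra).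
  replace (8 * (n * u) * (n ^ 16 * n ^ 9 * (u ^ 2 / n) ^ 9 + (s * (n * u)) ^ 16 * n * (u ^ 2 / n)))
    with (n ^ 17 * u ^ 19 * (8 * (1 + s ^ 16))) by (field; lra).
  apply Rmult_le_compat_l; [positivity|]. now apply cubic_ninth_le.
Qed.

Lemma summand_full_le_small n k x : 0 < n -> 1 <= k -> 0 < x -> n ^ 3 * x <= 1 ->
  summand n k n x <= 2 / (n * x ^ 3 * k ^ 2).
Proof.
  intros Hn Hk Hx Hw; unfold summand.
  apply Rdiv_le_cross; try positivity.
  assert (H0w : 0 <= n ^ 3 * x) by positivity.
  replace ((k ^ 3 * n ^ 12 * n ^ 3 * x ^ 3 + k ^ 9 * n ^ 6) * (n * x ^ 3 * k ^ 2))
    with (k ^ 5 * n * x * ((n ^ 3 * x) ^ 5 + k ^ 6 * (n ^ 3 * x) ^ 2)) by ring.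
  replace (2 * (n ^ 16 * n ^ 9 * x ^ 9 + k ^ 16 * n * x))
    with (k ^ 5 * n * x * (2 * k ^ 11) + 2 * (n ^ 16 * n ^ 9 * x ^ 9)) by ring.
  assert (0 <= 2 * (n ^ 16 * n ^ 9 * x ^ 9)) by positivity.
  enough (k ^ 5 * n * x * ((n ^ 3 * x) ^ 5 + k ^ 6 * (n ^ 3 * x) ^ 2)
          <= k ^ 5 * n * x * (2 * k ^ 11)) by lra.
  apply Rmult_le_compat_l; [positivity|].
  assert ((n ^ 3 * x) ^ 5 <= 1) by (rewrite <- (pow1 5); apply pow_incr; lra).
  assert ((n ^ 3 * x) ^ 2 <= 1) by (rewrite <- (pow1 2); apply pow_incr; lra).
  pose proof (Rle_pow k 6 11 Hk ltac:(lia)).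
  pose proof (pow_R1_Rle k 11 Hk).
  assert (k ^ 6 * (n ^ 3 * x) ^ 2 <= k ^ 6 * 1)
    by (apply Rmult_le_compat_l; [positivity|assumption]).
  lra.
Qed.

Lemma lsum_summand_le m x : (3 <= m)%nat -> 0 < x ->
  lsum (fun j => summand (INR m) (INR j) (INR (m - j)) x) (seq 3 (m - 3))
  <= 2 ^ 9 * lsum (fun j => summand (INR m) (INR j) (INR m) x) (seq 3 (m - 3))
     + 2 ^ 13 * (INR m * x) ^ 2 + 2 ^ 8 * ln (INR m) / (INR m * x).
Proof.
  intros Hm Hx.
  assert (Hn : 3 <= INR m) by (apply (le_INR 3) in Hm; simpl in Hm; lra).
  apply Rle_trans with (lsum (fun j => 2 ^ 9 * summand (INR m) (INR j) (INR m) x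
    + 2 ^ 13 * INR m * x ^ 2 + 2 ^ 7 / (INR m * x) * (1 / INR (m - j))) (seq 3 (m - 3))).
  - apply lsum_le; intros j Hj; apply in_seq in Hj.
    apply summand_le; [apply (le_INR 1); lia | apply (le_INR 1); lia | | exact Hx].
    rewrite <- plus_INR; f_equal; lia.
  - rewrite !lsum_plus, !lsum_scal, lsum_const, length_seq.
    pose proof (lsum_inv_sub_le_ln m 3 ltac:(lia)) as Hharm.
    assert (INR (m - 3) <= INR m) by (apply le_INR; lia).
    assert (INR (m - 3) * (2 ^ 13 * INR m * x ^ 2) <= INR m * (2 ^ 13 * INR m * x ^ 2))
      by (apply Rmult_le_compat_r; [positivity|assumption]).
    assert (2 ^ 7 / (INR m * x) * lsum (fun j => 1 / INR (m - j)) (seq 3 (m - 3))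
            <= 2 ^ 7 / (INR m * x) * (2 * ln (INR m)))
      by (apply Rmult_le_compat_l; [positivity|assumption]).
    replace (2 ^ 13 * (INR m * x) ^ 2) with (INR m * (2 ^ 13 * INR m * x ^ 2)) by ring.
    replace (2 ^ 8 * ln (INR m) / (INR m * x)) with (2 ^ 7 / (INR m * x) * (2 * ln (INR m)))
      by (field; lra).
    lra.
Qed.

Lemma lsum_summand_full_le n x L : 0 < n -> 0 < x ->
  lsum (fun j => summand n (INR j) n x) (seq 3 L) <= 8 / (n * x) ^ 4.
Proof.
  intros Hn Hx.
  assert (Ha : 0 < n * sqrt (n * x)) by positivity.
  set (a := n * sqrt (n * x)) in *.
  apply Rle_trans with (lsum (fun j => 8 * a / (n * x) ^ 4 * (1 / (a + INR j) ^ 2)) (seq 3 L)).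
  - apply lsum_le; intros j _.
    assert (0 <= INR j) by apply pos_INR.
    replace (8 * a / (n * x) ^ 4 * (1 / (a + INR j) ^ 2))
      with (8 * a / ((n * x) ^ 4 * (a + INR j) ^ 2)) by (field; split; lra).
    now apply summand_full_le.
  - rewrite lsum_scal.
    pose proof (lsum_inv_sq_le a 3 L ltac:(simpl; lra)) as Hsum.
    apply Rle_trans with (8 * a / (n * x) ^ 4 * (1 / (a + INR 3 - 1))).
    + apply Rmult_le_compat_l; [positivity|assumption].
    + replace (8 * a / (n * x) ^ 4 * (1 / (a + INR 3 - 1)))
        with (8 / (n * x) ^ 4 * (a / (a + 2))) by (simpl; field; split; lra).
      rewrite <- (Rmult_1_r (8 / (n * x) ^ 4)) at 2.
      apply Rmult_le_compat_l; [positivity|]. apply (Rdiv_le_1 a (a + 2)); lra.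
Qed.

Lemma lsum_summand_full_le_small n x L : 0 < n -> 0 < x -> n ^ 3 * x <= 1 ->
  lsum (fun j => summand n (INR j) n x) (seq 3 L) <= 1 / (n * x ^ 3).
Proof.
  intros Hn Hx Hw.
  apply Rle_trans with (lsum (fun j => 2 / (n * x ^ 3) * (1 / (0 + INR j) ^ 2)) (seq 3 L)).
  - apply lsum_le; intros j Hj; apply in_seq in Hj.
    assert (1 <= INR j) by (apply (le_INR 1); lia).
    replace (2 / (n * x ^ 3) * (1 / (0 + INR j) ^ 2)) with (2 / (n * x ^ 3 * INR j ^ 2))
      by (field; repeat split; lra).
    now apply summand_full_le_small.
  - rewrite lsum_scal.
    pose proof (lsum_inv_sq_le 0 3 L ltac:(simpl; lra)) as Hsum.
    apply Rle_trans with (2 / (n * x ^ 3) * (1 / (0 + INR 3 - 1))).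
    + apply Rmult_le_compat_l; [positivity|assumption].
    + simpl; right; field; lra.
Qed.

Lemma lhs17_eq f m : lhs17 f m =
  first_term (INR m) (f m) + second_term (INR m) (f m)
  + lsum (fun j => summand (INR m) (INR j) (INR (m - j)) (f m)) (seq 3 (m - 3)).
Proof.
  unfold lhs17, sum_range, lsum.
  replace (S (m - 1) - 3)%nat with (m - 3)%nat by lia. reflexivity.
Qed.

Lemma lhs17_nonneg f m : (3 <= m)%nat -> 0 < f m -> 0 <= lhs17 f m.
Proof.
  intros Hm Hx. rewrite lhs17_eq.
  assert (0 < INR m) by (apply lt_0_INR; lia).
  assert (0 <= lsum (fun j => summand (INR m) (INR j) (INR (m - j)) (f m)) (seq 3 (m - 3))).
  { apply lsum_nonneg; intros j Hj; apply in_seq in Hj.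
    apply summand_nonneg; try assumption; apply lt_0_INR; lia. }
  unfold first_term, second_term; positivity.
Qed.

Lemma ln_nonneg_le x : 1 <= x -> 0 <= ln x <= x.
Proof.
  intros Hx; split.
  - rewrite <- ln_1; apply ln_le; lra.
  - pose proof (exp_ineq1_le (ln x)) as He; rewrite exp_ln in He; lra.
Qed.

Lemma lhs17_le f m C : (3 <= m)%nat -> 0 < f m -> INR m * f m <= C ->
  lhs17 f m <= 2 ^ 13 * (1 + C ^ 6) * (ln (INR m) / (INR m * f m) + 1 / (INR m ^ 4 * f m ^ 4)).
Proof.
  intros Hm Hx HC. rewrite lhs17_eq.
  pose proof (lsum_summand_le m (f m) Hm Hx) as Hsum.
  assert (Hn : 1 <= INR m) by (apply (le_INR 1); lia).
  set (n := INR m) in *; set (x := f m) in *.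
  destruct (first_term_le n x ltac:(lra) Hx) as [H1 _].
  destruct (second_term_le n x ltac:(lra) Hx) as [H2 _].
  pose proof (lsum_summand_full_le n x (m - 3) ltac:(lra) Hx) as Hfull.
  assert (Hlog : 0 <= ln n / (n * x)) by (pose proof (ln_nonneg_le n Hn); positivity).
  replace (n ^ 4 * x ^ 4) with ((n * x) ^ 4) by ring.
  assert (Hsq : (n * x) ^ 2 <= C ^ 6 * (1 / (n * x) ^ 4)).
  { replace ((n * x) ^ 2) with ((n * x) ^ 6 * (1 / (n * x) ^ 4)) by (field; lra).
    apply Rmult_le_compat_r; [positivity|]. apply pow_incr; split; [positivity|assumption]. }
  assert (0 <= C) by (assert (0 < n * x) by positivity; lra).
  assert (0 <= C ^ 6 * (ln n / (n * x))) by positivity.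
  assert (Ht : 0 < 1 / (n * x) ^ 4) by positivity.
  set (t := 1 / (n * x) ^ 4) in *.
  replace (2 / (n * x) ^ 4) with (2 * t) in * by (unfold t; field; lra).
  replace (8 / (n * x) ^ 4) with (8 * t) in * by (unfold t; field; lra).
  replace (2 ^ 8 * ln n / (n * x)) with (2 ^ 8 * (ln n / (n * x))) in Hsum by (field; lra).
  lra.
Qed.

Lemma small_regime_le n x : 1 <= n -> 0 < x -> n ^ 3 * x <= 1 ->
  (n * x) ^ 2 <= 1 / (n * x ^ 3) /\ ln n / (n * x) <= 1 / (n * x ^ 3).
Proof.
  intros Hn Hx Hw.
  assert (Hx1 : x <= 1) by (assert (1 <= n ^ 3) by (apply pow_R1_Rle; lra); nra).
  split.
  - apply (Rle_div_r ((n * x) ^ 2) 1 (n * x ^ 3)); [positivity|].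
    replace ((n * x) ^ 2 * (n * x ^ 3)) with ((n ^ 3 * x) * x ^ 4) by ring.
    assert (x ^ 4 <= 1) by (rewrite <- (pow1 4); apply pow_incr; lra).
    rewrite <- (Rmult_1_r 1).
    apply Rmult_le_compat; [positivity|positivity|assumption..].
  - assert (Hnx : n * x ^ 2 <= 1).
    { assert (n <= n ^ 3) by (pose proof (Rle_pow n 1 3 Hn ltac:(lia)); rewrite pow_1 in *; lra).
      assert (n * x <= 1) by nra. nra. }
    pose proof (ln_nonneg_le n Hn) as Hln.
    apply Rdiv_le_cross; try positivity.
    replace (ln n * (n * x ^ 3)) with (ln n * x ^ 2 * (n * x)) by ring.
    apply Rmult_le_compat_r; [positivity|].
    assert (ln n * x ^ 2 <= n * x ^ 2) by (apply Rmult_le_compat_r; [positivity|lra]). lra.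
Qed.

Lemma lhs17_le_small f m : (3 <= m)%nat -> 0 < f m -> INR m ^ 3 * f m <= 1 ->
  lhs17 f m <= 2 ^ 14 * (1 / (INR m * f m ^ 3)).
Proof.
  intros Hm Hx Hw. rewrite lhs17_eq.
  pose proof (lsum_summand_le m (f m) Hm Hx) as Hsum.
  assert (Hn : 1 <= INR m) by (apply (le_INR 1); lia).
  set (n := INR m) in *; set (x := f m) in *.
  destruct (first_term_le n x ltac:(lra) Hx) as [_ H1].
  destruct (second_term_le n x ltac:(lra) Hx) as [_ H2].
  pose proof (lsum_summand_full_le_small n x (m - 3) ltac:(lra) Hx Hw) as Hfull.
  destruct (small_regime_le n x Hn Hx Hw) as [Hsq Hlog].
  replace (2 ^ 8 * ln n / (n * x)) with (2 ^ 8 * (ln n / (n * x))) in Hsum by (field; lra).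
  replace (2 / (n * x ^ 3)) with (2 * (1 / (n * x ^ 3))) in * by (field; lra).
  assert (0 <= 1 / (n * x ^ 3)) by positivity.
  assert (0 <= (n * x) ^ 2) by positivity.
  lra.
Qed.

Lemma bigO_of_le g h C N : 0 <= C ->
  (forall n, (N <= n)%nat -> 0 <= g n <= C * h n) -> bigO g h.
Proof.
  intros HC H; exists C, N; intros n Hn.
  destruct (H n Hn) as [Hg Hgh]; rewrite Rabs_pos_eq by lra.
  apply Rle_trans with (C * h n); [lra|].
  apply Rmult_le_compat_l; [lra|apply Rle_abs].
Qed.

Lemma bigO_inv_bound f : bigO f (fun n => 1 / INR n) ->
  exists C N, 0 <= C /\ forall n, (N <= n)%nat -> INR n * f n <= C.
Proof.
  intros [C [N HC]].
  assert (Hbound : forall n, (Nat.max N 1 <= n)%nat -> INR n * Rabs (f n) <= C).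
  { intros n Hn. assert (Hn0 : 0 < INR n) by (apply lt_0_INR; lia).
    specialize (HC n ltac:(lia)); rewrite (Rabs_pos_eq (1 / INR n)) in HC by positivity.
    apply Rle_trans with (INR n * (C * (1 / INR n))).
    - apply Rmult_le_compat_l; [lra|exact HC].
    - right; field; lra. }
  exists C, (Nat.max N 1); split.
  - pose proof (Hbound _ (le_n _)). pose proof (pos_INR (Nat.max N 1)).
    pose proof (Rabs_pos (f (Nat.max N 1))).
    assert (0 <= INR (Nat.max N 1) * Rabs (f (Nat.max N 1))) by positivity; lra.
  - intros n Hn. pose proof (Hbound n Hn). pose proof (pos_INR n).
    assert (INR n * f n <= INR n * Rabs (f n)) by (apply Rmult_le_compat_l; [lra|apply Rle_abs]).
    lra.
Qed.

Lemma littleo_inv_cube_bound f : littleo f (fun n => 1 / INR n ^ 3) ->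
  exists N, forall n, (N <= n)%nat -> INR n ^ 3 * f n <= 1.
Proof.
  intros Hf; destruct (Hf 1 Rlt_0_1) as [N HN]; exists (Nat.max N 1); intros n Hn.
  assert (Hn0 : 0 < INR n) by (apply lt_0_INR; lia).
  specialize (HN n ltac:(lia)); rewrite (Rabs_pos_eq (1 / INR n ^ 3)) in HN by positivity.
  apply Rle_trans with (INR n ^ 3 * (1 * (1 / INR n ^ 3))).
  - apply Rmult_le_compat_l; [positivity|]. eapply Rle_trans; [apply Rle_abs|exact HN].
  - right; field; lra.
Qed.

Theorem lemma17 (f : nat -> R)
  (fpos : forall n : nat, 0 < f n)
  (fO : bigO f (fun n => 1 / INR n)) :
  bigO (lhs17 f) (fun n => ln (INR n) / (INR n * f n) + 1 / (INR n ^ 4 * f n ^ 4))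
  /\ (littleo f (fun n => 1 / INR n ^ 3) ->
      bigO (lhs17 f) (fun n => 1 / (INR n * f n ^ 3))).
Proof.
  split.
  - destruct (bigO_inv_bound f fO) as [C [N [HC0 HC]]].
    apply (bigO_of_le _ _ (2 ^ 13 * (1 + C ^ 6)) (Nat.max N 3)); [positivity|].
    intros m Hm; split; [apply lhs17_nonneg; auto; lia|].
    apply lhs17_le; [lia|apply fpos|apply HC; lia].
  - intros Hf; destruct (littleo_inv_cube_bound f Hf) as [N HN].
    apply (bigO_of_le _ _ (2 ^ 14) (Nat.max N 3)); [lra|].
    intros m Hm; split; [apply lhs17_nonneg; auto; lia|].
    apply lhs17_le_small; [lia|apply fpos|apply HN; lia].
Qed.
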